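(* Let $0<r<q-1$, $n\ge2$ and $0\le k,s\le q-1$. If $s_{n-1}^k$ (resp. $t_{n-1}^s$) is $I(1)$-invariant modulo $(\mathrm{Ker}\,T_{-1,0},\mathrm{Ker}\,T_{1,2})$, then $s_n^k$ (resp. $t_n^s$) is also $I(1)$-invariant modulo $(\mathrm{Ker}\,T_{-1,0},\mathrm{Ker}\,T_{1,2})$, i.e. $gs_n^k-s_n^k$ (resp. $gt_n^s-t_n^s$) lies in $\mathrm{Ker}\,T_{-1,0}+\mathrm{Ker}\,T_{1,2}$ for all $g\in I(1)$.
   Context: $F$ is a finite extension of $\mathbb Q_p$ with ring of integers $\mathcal O$, uniformizer $\varpi$, residue field $\mathbb F_q$; $[x]$ is the multiplicative representative of $x\in\mathbb F_q$, $\bar a$ the reduction of $a\in\mathcal O$; convention $0^0=1$. $G=\mathrm{GL}_2(F)$, $K=\mathrm{GL}_2(\mathcal O)$, $Z$ the centre, $I$ the Iwahori subgroup of $K$ (lower-left entry in $\varpi\mathcal O$), $I(1)$ the pro-$p$ Iwahori (elements of $I$ with diagonal entries $\equiv1\bmod\varpi$). $\chi_r:IZ\to\overline{\mathbb F}_p^\times$, $\begin{pmatrix} a&b\\ \varpi c&d\end{pmatrix}\mapsto\bar d^{\,r}$, $\mathrm{diag}(\varpi,\varpi)\mapsto1$; in the compact induction $\mathrm{ind}_{IZ}^G\chi_r$, $[g,1]$ is the element supported on $IZg^{-1}$ with value $1$ at $g^{-1}$, so $h[g,1]=[hg,1]$. $\beta=\begin{pmatrix}0&1\\ \varpi&0\end{pmatrix}$,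 $w=\begin{pmatrix}0&1\\1&0\end{pmatrix}$. $T_{-1,0},T_{1,2}$ are the $G$-endomorphisms with $T_{-1,0}[g,1]=\sum_{\lambda\in I_1}[g\begin{pmatrix}\varpi&\lambda\\0&1\end{pmatrix},1]$, $T_{1,2}[g,1]=\sum_{\lambda\in I_1}[g\beta\begin{pmatrix}1&\lambda\\0&1\end{pmatrix}w,1]$; $(\mathrm{Ker}\,T_{-1,0},\mathrm{Ker}\,T_{1,2})$ denotes $\mathrm{Ker}\,T_{-1,0}+\mathrm{Ker}\,T_{1,2}$. $I_n=\{\sum_{i=0}^{n-1}[\mu_i]\varpi^i:\mu_i\in\mathbb F_q\}$, digits $\mu_i$, truncation $[\mu]_m=\sum_{i<m}[\mu_i]\varpi^i$. $s_n^k=\sum_{\mu\in I_n}\mu_{n-1}^k[\begin{pmatrix}\varpi^n&\mu\\0&1\end{pmatrix},1]$ and $t_n^s=\sum_{\mu\in I_n}\mu_{n-1}^s[\begin{pmatrix}\varpi^{n-1}&[\mu]_{n-1}\\0&1\end{pmatrix}\begin{pmatrix}1&[\mu_{n-1}]\\0&1\end{pmatrix}w,1]$. *)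

From HB Require Import structures.
From mathcomp Require Import all_boot all_order all_algebra all_field.
From Stdlib Require Import ClassicalEpsilon.
Set Implicit Arguments. Unset Strict Implicit. Unset Printing Implicit Defensive.
Import Order.TTheory GRing.Theory Num.Theory.
Local Open Scope ring_scope.

Notation i0 := (@ord0 1).
Notation i1 := (@ord_max 1).

Definition mx2 (R : Type) (a b c d : R) : 'M[R]_2 :=
  \matrix_(i < 2, j < 2)
    if (i : nat) == 0%N then (if (j : nat) == 0%N then a else b)
    else (if (j : nat) == 0%N then c else d).

Section LocalField.
Variables (F : fieldType) (kF : finFieldType).
(* v : normalized discrete valuation on F^x (its value at 0 is irrelevant) *)
Variables (v : F -> int) (pi : F) (red : F -> kF).

Definition inO (x : F) : bool := (x == 0) || (0 <= v x).
Definition inPO (x : F) : bool := (x == 0) || (1 <= v x).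
Definition unitO (x : F) : bool := (x != 0) && (v x == 0).

Definition vcauchy (u : nat -> F) : Prop :=
  forall N : int, exists n0 : nat, forall m n : nat, (n0 <= m)%N -> (n0 <= n)%N ->
    u m = u n \/ N <= v (u m - u n).
Definition vconverges (u : nat -> F) (l : F) : Prop :=
  forall N : int, exists n0 : nat, forall n : nat, (n0 <= n)%N ->
    u n = l \/ N <= v (u n - l).

(* F is a finite extension of Q_p: a field of characteristic 0, complete for a
   discrete valuation v (normalized, with uniformizer pi), whose residue field
   O / pi O is (via red) the finite field kF of characteristic p. *)
Record p_adic_field (p : nat) : Prop := {
  paf_prime : prime p;
  paf_char0 : forall n : nat, (0 < n)%N -> n%:R != 0 :> F;
  paf_vM : forall x y, x != 0 -> y != 0 -> v (x * y) = v x + v y;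
  paf_vD : forall x y, x != 0 -> y != 0 -> x + y != 0 ->
             Num.min (v x) (v y) <= v (x + y);
  paf_pi_neq0 : pi != 0;
  paf_vpi : v pi = 1;
  paf_complete : forall u, vcauchy u -> exists l, vconverges u l;
  paf_redD : forall x y, inO x -> inO y -> red (x + y) = red x + red y;
  paf_redM : forall x y, inO x -> inO y -> red (x * y) = red x * red y;
  paf_red1 : red 1 = 1;
  paf_red_surj : forall a : kF, exists2 x, inO x & red x = a;
  paf_red_ker : forall x, inO x -> (red x == 0) = inPO x;
  paf_char_res : p \in [pchar kF]
}.

Record teichmuller (teich : kF -> F) : Prop := {
  teich_O : forall x, inO (teich x);
  teich_red : forall x, red (teich x) = x;
  teich_M : forall x y, teich (x * y) = teich x * teich y
}.
End LocalField.

Record alg_closure_Fp (p : nat) (E : closedFieldType) : Prop := {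
  acl_char : p \in [pchar E];
  acl_alg : forall x : E, exists2 n : nat, (0 < n)%N & x ^+ (p ^ n) = x
}.

Section Rep.
Variables (F : fieldType) (kF : finFieldType) (E : closedFieldType).
Variables (v : F -> int) (pi : F) (red : F -> kF) (teich : kF -> F) (iota : kF -> E).

Definition inG (g : 'M[F]_2) : bool := g \in unitmx.
Definition inI (g : 'M[F]_2) : bool :=
  [&& inO v (g i0 i0), inO v (g i0 i1), inPO v (g i1 i0), inO v (g i1 i1)
    & unitO v (\det g)].
Definition inI1 (g : 'M[F]_2) : bool :=
  [&& inI g, red (g i0 i0) == 1 & red (g i1 i1) == 1].
(* IZ, with Z = { a%:M : a in F^x } = pi^Z . O^x *)
Definition inIZ (g : 'M[F]_2) : Prop := exists m : int, inI ((pi ^ m) *: g).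

(* chi_r on IZ: for h = pi^m h' with h' in I, chi_r(h) = (reduction of h'_{22})^r;
   here m = v(h_{22}) *)
Definition chi (r : nat) (h : 'M[F]_2) : E :=
  iota (red (pi ^ (- v (h i1 i1)) * h i1 i1)) ^+ r.

(* [g,1] in ind_{IZ}^G chi_r, as a function on G (zero outside G):
   supported on IZ g^-1, x |-> chi_r(x g) *)
Definition brk (r : nat) (g : 'M[F]_2) : 'M[F]_2 -> E := fun x =>
  if excluded_middle_informative (inG x /\ inIZ (x *m g))
  then chi r (x *m g) else 0.

Definition comb (r : nat) (l : seq (E * 'M[F]_2)) : 'M[F]_2 -> E :=
  fun x => \sum_(cg <- l) cg.1 * brk r cg.2 x.

Definition betaM : 'M[F]_2 := mx2 0 1 pi 0.
Definition wM : 'M[F]_2 := mx2 0 1 1 0.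

(* T_{-1,0} and T_{1,2} applied termwise to sum_i c_i [g_i,1]; I_1 = {[mu] : mu in F_q} *)
Definition Tm10 (l : seq (E * 'M[F]_2)) : seq (E * 'M[F]_2) :=
  flatten [seq [seq (cg.1, cg.2 *m mx2 pi (teich mu) 0 1) | mu : kF] | cg <- l].
Definition T12 (l : seq (E * 'M[F]_2)) : seq (E * 'M[F]_2) :=
  flatten [seq [seq (cg.1, cg.2 *m betaM *m mx2 1 (teich mu) 0 1 *m wM) | mu : kF]
          | cg <- l].

(* f in Ker T, where T is given on the spanning family [g,1] (g in G) *)
Definition inKer (r : nat) (T : seq (E * 'M[F]_2) -> seq (E * 'M[F]_2))
  (f : 'M[F]_2 -> E) : Prop :=
  exists l : seq (E * 'M[F]_2), all (fun cg => inG cg.2) l /\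
    f = comb r l /\ comb r (T l) = (fun _ => 0).

Definition inKerSum (r : nat) (f : 'M[F]_2 -> E) : Prop :=
  exists f1 f2, inKer r Tm10 f1 /\ inKer r T12 f2 /\ f = (fun x => f1 x + f2 x).

(* G acts by right translation: (g f)(x) = f(x g), so g [h,1] = [gh,1] *)
Definition act (g : 'M[F]_2) (f : 'M[F]_2 -> E) : 'M[F]_2 -> E := fun x => f (x *m g).

Definition I1_inv_mod (r : nat) (f : 'M[F]_2 -> E) : Prop :=
  forall g, inI1 g -> inKerSum r (fun x => act g f x - f x).

Definition digval (n : nat) (mu : n.-tuple kF) (m : nat) : F :=
  \sum_(i < m) teich (nth 0 mu i) * pi ^+ i.

Definition s_list (n e : nat) : seq (E * 'M[F]_2) :=
  [seq (iota (nth 0 mu n.-1) ^+ e, mx2 (pi ^+ n) (digval mu n) 0 1) | mu : n.-tuple kF].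
Definition t_list (n e : nat) : seq (E * 'M[F]_2) :=
  [seq (iota (nth 0 mu n.-1) ^+ e,
        mx2 (pi ^+ n.-1) (digval mu n.-1) 0 1 *m mx2 1 (teich (nth 0 mu n.-1)) 0 1 *m wM)
  | mu : n.-tuple kF].

Definition s_vec r n e := comb r (s_list n e).
Definition t_vec r n e := comb r (t_list n e).
End Rep.

(* For [g] in I(1) and a digit [a], one has
   [g *m mx2 pi [a] 0 1 = mx2 pi [a + c] 0 1 *m h_a] with [c] the reduction of [g12]
   and [h_a] again in I(1).  Both s_n and t_n are sums, over their first digit [a], of
   the translates of s_(n-1), resp. t_(n-1), by [mx2 pi [a] 0 1].  As [a |-> a + c]
   permutes the digits, [g s_n - s_n] is the sum over [a] of the translates by
   [mx2 pi [a + c] 0 1] of [h_a s_(n-1) - s_(n-1)], and Ker T_{-1,0} + Ker T_{1,2} is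
   stable under sums and under the action of G. *)

From Pilot Require Import Defs.
From HB Require Import structures.
From mathcomp Require Import all_boot all_order all_algebra all_field.
From mathcomp Require Import zify ring.
From Stdlib Require Import FunctionalExtensionality ClassicalEpsilon.
Set Implicit Arguments. Unset Strict Implicit. Unset Printing Implicit Defensive.
Import Order.TTheory GRing.Theory Num.Theory.
Local Open Scope ring_scope.

Lemma mx2_eta (R : Type) (g : 'M[R]_2) :
  g = mx2 (g i0 i0) (g i0 i1) (g i1 i0) (g i1 i1).
Proof.
apply/matrixP => i j; rewrite mxE.
by case: i => [[|[|i]] Hi] //; case: j => [[|[|j]] Hj] //=; congr (g _ _); apply/val_inj.
Qed.

Lemma mx2_mul (R : pzRingType) (a b c d a' b' c' d' : R) :
  mx2 a b c d *m mx2 a' b' c' d' =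
  mx2 (a * a' + b * c') (a * b' + b * d') (c * a' + d * c') (c * b' + d * d').
Proof.
apply/matrixP => i j; rewrite !mxE !big_ord_recl big_ord0 !mxE /= addr0.
by case: i => [[|[|i]] Hi] //; case: j => [[|[|j]] Hj].
Qed.

Lemma det_mx2 (R : comPzRingType) (a b c d : R) : \det (mx2 a b c d) = a * d - b * c.
Proof.
rewrite (expand_det_row _ ord0) !big_ord_recl big_ord0 addr0 /cofactor !det_mx11 !mxE /=.
by rewrite /bump /= !expr0 !mul1r expr1 mulN1r mulrN.
Qed.

Lemma upper_mx2_unit (F : fieldType) (x t : F) : x != 0 -> mx2 x t 0 1 \in unitmx.
Proof. by move=> x0; rewrite unitmxE det_mx2 mulr1 mulr0 subr0 unitfE. Qed.

Section Valuation.
Variables (F : fieldType) (kF : finFieldType) (v : F -> int) (pi : F) (red : F -> kF).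
Variable p : nat.
Hypothesis HF : p_adic_field v pi red p.

Lemma v1 : v 1 = 0.
Proof.
have := paf_vM HF (oner_neq0 F) (oner_neq0 F); rewrite mul1r => v11.
by apply/eqP; rewrite -(addrI (v 1) (etrans (addr0 _) v11)).
Qed.

Lemma vN x : x != 0 -> v (- x) = v x.
Proof.
move=> x0; have N10 : (-1 : F) != 0 by rewrite oppr_eq0 oner_neq0.
have vN1 : v (-1) = 0.
  by have := paf_vM HF N10 N10; rewrite mulrNN mul1r v1 => h; lia.
by rewrite -mulN1r (paf_vM HF N10 x0) vN1 add0r.
Qed.

Lemma inOD x y : inO v x -> inO v y -> inO v (x + y).
Proof.
rewrite /inO; have [->|x0] /= := eqVneq x 0; first by rewrite add0r.
have [->|y0] /= := eqVneq y 0; first by rewrite addr0 => ->; rewrite orbT.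
move=> vx vy; have [//|xy0] /= := eqVneq (x + y) 0.
by apply: le_trans (paf_vD HF x0 y0 xy0); rewrite le_min vx vy.
Qed.

Lemma inON x : inO v x -> inO v (- x).
Proof.
rewrite /inO; have [->|x0] /= := eqVneq x 0; first by rewrite oppr0 eqxx.
by rewrite vN // oppr_eq0 (negPf x0).
Qed.

Lemma inOB x y : inO v x -> inO v y -> inO v (x - y).
Proof. by move=> Ox Oy; rewrite inOD ?inON. Qed.

Lemma inOM x y : inO v x -> inO v y -> inO v (x * y).
Proof.
rewrite /inO; have [->|x0] /= := eqVneq x 0; first by rewrite mul0r eqxx.
have [->|y0] /= := eqVneq y 0; first by rewrite mulr0 eqxx.
by move=> vx vy; rewrite (paf_vM HF x0 y0) addr_ge0 ?orbT.
Qed.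

Lemma inPO_inO x : inPO v x -> inO v x.
Proof. by rewrite /inPO /inO; case/orP => [->//|vx]; rewrite (le_trans _ vx) ?orbT. Qed.

Lemma inPO_mulpi x : inO v x -> inPO v (x * pi).
Proof.
rewrite /inO /inPO; have [->|x0] /= := eqVneq x 0; first by rewrite mul0r eqxx.
by move=> vx; rewrite (paf_vM HF x0 (paf_pi_neq0 HF)) (paf_vpi HF) lerDr vx orbT.
Qed.

Lemma inO_divpi x : inPO v x -> inO v (x / pi).
Proof.
have pi0 := paf_pi_neq0 HF; have pi'0 : pi^-1 != 0 by rewrite invr_eq0.
have vpi' : v pi^-1 = -1.
  by have := paf_vM HF pi0 pi'0; rewrite divff // v1 (paf_vpi HF) => h; lia.
rewrite /inPO /inO; have [->|x0] /= := eqVneq x 0; first by rewrite mul0r eqxx.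
by move=> vx; rewrite (paf_vM HF x0 pi'0) vpi' subr_ge0 vx orbT.
Qed.

Lemma redB x y : inO v x -> inO v y -> red (x - y) = red x - red y.
Proof.
move=> Ox Oy; apply/eqP.
by rewrite eq_sym subr_eq -(paf_redD HF (inOB Ox Oy) Oy) subrK.
Qed.

Lemma red_inPO x : inPO v x -> red x = 0.
Proof. by move=> POx; apply/eqP; rewrite (paf_red_ker HF (inPO_inO POx)). Qed.

End Valuation.

Definition I1_factor (F : fieldType) (pi : F) (g : 'M[F]_2) (t t' : F) : 'M[F]_2 :=
  mx2 (g i0 i0 - t' * g i1 i0)
      ((g i0 i0 * t + g i0 i1 - t' * (g i1 i0 * t + g i1 i1)) / pi)
      (g i1 i0 * pi) (g i1 i0 * t + g i1 i1).

Lemma mul_upper_I1_factor (F : fieldType) (pi : F) (g : 'M[F]_2) (t t' : F) :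
  pi != 0 -> g *m mx2 pi t 0 1 = mx2 pi t' 0 1 *m I1_factor pi g t t'.
Proof.
move=> pi0; rewrite /I1_factor {1}[g]mx2_eta !mx2_mul.
by congr mx2; rewrite ?[pi * (_ / pi)]mulrC ?divfK //; ring.
Qed.

Lemma det_I1_factor (F : fieldType) (pi : F) (g : 'M[F]_2) (t t' : F) :
  pi != 0 -> \det (I1_factor pi g t t') = \det g.
Proof.
move=> pi0; have := congr1 determinant (mul_upper_I1_factor g t t' pi0).
by rewrite !det_mulmx !det_mx2 !mulr1 !mulr0 !subr0 mulrC => /mulfI->.
Qed.

Section I1Factor.
Variables (F : fieldType) (kF : finFieldType) (v : F -> int) (pi : F) (red : F -> kF).
Variable p : nat.
Hypothesis HF : p_adic_field v pi red p.

Lemma I1_factor_in_I1 (g : 'M[F]_2) (t t' : F) :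
  inI1 v red g -> inO v t -> inO v t' -> red t' = red t + red (g i0 i1) ->
  inI1 v red (I1_factor pi g t t').
Proof.
move=> Hg Ot Ot' redt'.
rewrite /inI1 /inI det_I1_factor ?(paf_pi_neq0 HF) //.
move: Hg; rewrite /inI1 /inI /I1_factor !mxE /=.
set A := g i0 i0; set B := g i0 i1; set C := g i1 i0; set D := g i1 i1.
case/and3P => /and5P[OA OB POC OD ->] /eqP redA /eqP redD.
have OC := inPO_inO POC; have redC := red_inPO HF POC.
have OCtD : inO v (C * t + D) by rewrite (inOD HF) ?(inOM HF).
have redCtD : red (C * t + D) = 1.
  by rewrite (paf_redD HF) ?(inOM HF) // (paf_redM HF) // redC redD mul0r add0r.
set N := A * t + B - t' * (C * t + D).
have ON : inO v N by rewrite (inOB HF) ?(inOD HF) ?(inOM HF).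
have PON : inPO v N.
  rewrite -(paf_red_ker HF ON) /N (redB HF) ?(inOD HF) ?(inOM HF) //.
  rewrite (paf_redD HF) ?(inOM HF) // !(paf_redM HF) // redA redt' redCtD.
  by rewrite mul1r mulr1 subrr.
rewrite andbT redCtD eqxx andbT.
rewrite (inOB HF) ?(inO_divpi HF) ?(inPO_mulpi HF) ?(inOM HF) // OCtD /=.
by rewrite (redB HF) ?(inOM HF) // (paf_redM HF) // redC mulr0 subr0 redA.
Qed.

End I1Factor.

Section HeckeKernels.
Variables (F : fieldType) (kF : finFieldType) (E : closedFieldType).
Variables (v : F -> int) (pi : F) (red : F -> kF) (teich : kF -> F) (iota : kF -> E).
Variable r : nat.

Local Notation brk := (brk v pi red iota r).
Local Notation comb := (comb v pi red iota r).
Local Notation inKer := (inKer v pi red iota r).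
Local Notation inKerSum := (inKerSum v pi red teich iota r).
Local Notation Tm10 := (@Tm10 F kF E pi teich).
Local Notation T12 := (@T12 F kF E pi teich).

Definition lmul_list (M : 'M[F]_2) l : seq (E * 'M[F]_2) :=
  [seq (cg.1, M *m cg.2) | cg <- l].

Lemma brk_mulmx (M h x : 'M[F]_2) : M \in unitmx -> brk h (x *m M) = brk (M *m h) x.
Proof.
move=> uM; rewrite /Defs.brk mulmxA.
case: excluded_middle_informative => [[GxM IZ]|notL];
  case: excluded_middle_informative => [[Gx IZx]|notR] //.
- by case: notR; split=> //; move: GxM; rewrite /inG unitmx_mul => /andP[].
- by case: notL; split=> //; rewrite /inG unitmx_mul uM andbT.
Qed.

Lemma act_comb (M : 'M[F]_2) l : M \in unitmx -> act M (comb l) = comb (lmul_list M l).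
Proof.
move=> uM; apply: functional_extensionality => x.
by rewrite /act /Defs.comb big_map; apply: eq_bigr => cg _; rewrite brk_mulmx.
Qed.

Lemma comb_cat l1 l2 : comb (l1 ++ l2) = (fun x => comb l1 x + comb l2 x).
Proof. by apply: functional_extensionality => x; rewrite /Defs.comb big_cat. Qed.

Section LinearEquivariant.
Variable T : seq (E * 'M[F]_2) -> seq (E * 'M[F]_2).
Hypothesis T_cat : forall l1 l2, T (l1 ++ l2) = T l1 ++ T l2.
Hypothesis T_lmul : forall M l, T (lmul_list M l) = lmul_list M (T l).

Lemma inKer0 : inKer T (fun _ => 0).
Proof.
have T0 : T [::] = [::].
  have := congr1 size (T_cat [::] [::]); rewrite cat0s size_cat => ?.
  by apply/nilP; rewrite /nilp; lia.
exists [::]; rewrite T0; split=> //.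
by split; apply: functional_extensionality => x; rewrite /Defs.comb big_nil.
Qed.

Lemma inKerD f1 f2 : inKer T f1 -> inKer T f2 -> inKer T (fun x => f1 x + f2 x).
Proof.
move=> [l1 [G1 [-> K1]]] [l2 [G2 [-> K2]]]; exists (l1 ++ l2).
rewrite all_cat G1 G2 T_cat !comb_cat K1 K2; split=> //; split=> //.
by apply: functional_extensionality => x; rewrite addr0.
Qed.

Lemma inKer_act M f : M \in unitmx -> inKer T f -> inKer T (act M f).
Proof.
move=> uM [l [Gl [-> Kl]]]; exists (lmul_list M l); split; last split.
- by rewrite all_map; apply/allP => cg /(allP Gl); rewrite /= /inG unitmx_mul uM.
- exact: act_comb.
- by rewrite T_lmul -act_comb // Kl.
Qed.

End LinearEquivariant.

Lemma Tm10_cat l1 l2 : Tm10 (l1 ++ l2) = Tm10 l1 ++ Tm10 l2.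
Proof. by rewrite /Tm10 map_cat flatten_cat. Qed.

Lemma T12_cat l1 l2 : T12 (l1 ++ l2) = T12 l1 ++ T12 l2.
Proof. by rewrite /T12 map_cat flatten_cat. Qed.

Lemma Tm10_lmul M l : Tm10 (lmul_list M l) = lmul_list M (Tm10 l).
Proof.
rewrite /Tm10 /lmul_list map_flatten -!map_comp; congr flatten; apply: eq_map => cg /=.
by rewrite -map_comp; apply: eq_map => mu /=; rewrite mulmxA.
Qed.

Lemma T12_lmul M l : T12 (lmul_list M l) = lmul_list M (T12 l).
Proof.
rewrite /T12 /lmul_list map_flatten -!map_comp; congr flatten; apply: eq_map => cg /=.
by rewrite -map_comp; apply: eq_map => mu /=; rewrite !mulmxA.
Qed.

Lemma inKerSum0 : inKerSum (fun _ => 0).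
Proof.
exists (fun _ => 0), (fun _ => 0).
split; first exact: inKer0 Tm10_cat.
split; first exact: inKer0 T12_cat.
by apply: functional_extensionality => x; rewrite addr0.
Qed.

Lemma inKerSumD f1 f2 : inKerSum f1 -> inKerSum f2 -> inKerSum (fun x => f1 x + f2 x).
Proof.
move=> [a1 [b1 [Ka1 [Kb1 ->]]]] [a2 [b2 [Ka2 [Kb2 ->]]]].
exists (fun x => a1 x + a2 x), (fun x => b1 x + b2 x).
split; first exact: (inKerD Tm10_cat Ka1 Ka2).
split; first exact: (inKerD T12_cat Kb1 Kb2).
by apply: functional_extensionality => x; rewrite addrACA.
Qed.

Lemma inKerSum_act M f : M \in unitmx -> inKerSum f -> inKerSum (act M f).
Proof.
move=> uM [a [b [Ka [Kb ->]]]]; exists (act M a), (act M b).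
split; first exact: (inKer_act Tm10_lmul uM Ka).
by split; first exact: (inKer_act T12_lmul uM Kb).
Qed.

Lemma inKerSum_sum (I : Type) (s : seq I) (f : I -> 'M[F]_2 -> E) :
  (forall i, inKerSum (f i)) -> inKerSum (fun x => \sum_(i <- s) f i x).
Proof.
move=> Kf; elim: s => [|i s IHs].
  have -> : (fun x => \sum_(j <- [::]) f j x) = (fun _ => 0).
    by apply: functional_extensionality => x; rewrite big_nil.
  exact: inKerSum0.
have -> : (fun x => \sum_(j <- i :: s) f j x) = (fun x => f i x + \sum_(j <- s) f j x).
  by apply: functional_extensionality => x; rewrite big_cons.
exact: (inKerSumD (Kf i) IHs).
Qed.

End HeckeKernels.

Lemma big_tuple_cons (T : finType) (R : nmodType) m (G : m.+1.-tuple T -> R) :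
  \sum_(mu : m.+1.-tuple T) G mu = \sum_(a : T) \sum_(t : m.-tuple T) G (cons_tuple a t).
Proof.
rewrite pair_big /= (reindex (fun xt : T * m.-tuple T => cons_tuple xt.1 xt.2)) //=.
exists (fun mu => (thead mu, behead_tuple mu)) => [[a t] _|mu _] /=.
  by congr pair; apply: val_inj.
by apply: val_inj; rewrite /= [in RHS](tuple_eta mu).
Qed.

Lemma digval_cons (F : fieldType) (kF : finFieldType) (pi : F) (teich : kF -> F) m a
    (t : m.-tuple kF) j :
  digval pi teich (cons_tuple a t) j.+1 = teich a + pi * digval pi teich t j.
Proof.
rewrite /digval big_ord_recl /= expr0 mulr1 mulr_sumr; congr (_ + _).
by apply: eq_bigr => i _; rewrite exprS mulrCA.
Qed.

Lemma upper_mul_digval (F : fieldType) (kF : finFieldType) (pi : F) (teich : kF -> F) m a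
    (t : m.-tuple kF) j :
  mx2 pi (teich a) 0 1 *m mx2 (pi ^+ j) (digval pi teich t j) 0 1 =
  mx2 (pi ^+ j.+1) (digval pi teich (cons_tuple a t) j.+1) 0 1.
Proof.
rewrite mx2_mul digval_cons exprS.
by rewrite !(mulr0, addr0, mulr1, mul0r, mul1r, add0r) [teich a + _]addrC.
Qed.

Section Recursion.
Variables (F : fieldType) (kF : finFieldType) (E : closedFieldType).
Variables (v : F -> int) (pi : F) (red : F -> kF) (teich : kF -> F) (iota : kF -> E).
Variable r : nat.
Hypothesis pi0 : pi != 0.

Local Notation brk := (brk v pi red iota r).
Local Notation s_vec := (s_vec v pi red teich iota r).
Local Notation t_vec := (t_vec v pi red teich iota r).

Lemma comb_tuple n (f : n.-tuple kF -> E * 'M[F]_2) x :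
  comb v pi red iota r [seq f mu | mu : n.-tuple kF] x =
  \sum_(mu : n.-tuple kF) (f mu).1 * brk (f mu).2 x.
Proof. by rewrite /comb big_image. Qed.

(* Peels off the first digit; the coefficient, a power of the last digit, is unaffected
   only because at least one digit remains. *)
Lemma s_vec_succ m e x :
  s_vec m.+2 e x = \sum_(a : kF) s_vec m.+1 e (x *m mx2 pi (teich a) 0 1).
Proof.
rewrite /Defs.s_vec /s_list comb_tuple big_tuple_cons; apply: eq_bigr => a _.
rewrite comb_tuple; apply: eq_bigr => t _ /=.
by rewrite brk_mulmx ?upper_mx2_unit // upper_mul_digval.
Qed.

Lemma t_vec_succ m e x :
  t_vec m.+2 e x = \sum_(a : kF) t_vec m.+1 e (x *m mx2 pi (teich a) 0 1).
Proof.
rewrite /Defs.t_vec /t_list comb_tuple big_tuple_cons; apply: eq_bigr => a _.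
rewrite comb_tuple; apply: eq_bigr => t _ /=.
by rewrite brk_mulmx ?upper_mx2_unit // !mulmxA upper_mul_digval.
Qed.

End Recursion.

Lemma I1_inv_mod_sum_upper (F : fieldType) (kF : finFieldType) (E : closedFieldType)
    (v : F -> int) (pi : F) (red : F -> kF) (teich : kF -> F) (iota : kF -> E) p r
    (fs fb : 'M[F]_2 -> E) :
  p_adic_field v pi red p -> teichmuller v red teich ->
  (forall x, fb x = \sum_(a : kF) fs (x *m mx2 pi (teich a) 0 1)) ->
  I1_inv_mod v pi red teich iota r fs -> I1_inv_mod v pi red teich iota r fb.
Proof.
move=> HF Ht fbE inv_fs g I1g.
set c := red (g i0 i1).
pose u a := mx2 pi (teich a) 0 1.
pose h a := I1_factor pi g (teich a) (teich (a + c)).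
have gu a : g *m u a = u (a + c) *m h a by apply: mul_upper_I1_factor (paf_pi_neq0 HF).
have I1h a : inI1 v red (h a).
  by apply: (I1_factor_in_I1 HF) => //; rewrite ?(teich_O Ht) // !(teich_red Ht).
have -> : (fun x => act g fb x - fb x) =
          (fun x => \sum_(a : kF) act (u (a + c)) (fun y => act (h a) fs y - fs y) x).
  apply: functional_extensionality => x.
  rewrite /act !fbE [X in _ - X](reindex_inj (addIr c)) -sumrB /=.
  by apply: eq_bigr => a _; rewrite -mulmxA gu mulmxA.
apply: (@inKerSum_sum _ _ _ v pi red teich iota r _ _
          (fun a => act (u (a + c)) (fun y => act (h a) fs y - fs y))) => a.
apply: inKerSum_act; last exact: inv_fs.
exact: upper_mx2_unit (paf_pi_neq0 HF).
Qed.

Theorem lemma4p1 (p : nat) (F : fieldType) (kF : finFieldType) (E : closedFieldType)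
  (v : F -> int) (pi : F) (red : F -> kF) (teich : kF -> F) (iota : {rmorphism kF -> E})
  (HF : p_adic_field v pi red p) (Hteich : teichmuller v red teich)
  (HE : alg_closure_Fp p E)
  (r n k s : nat) :
  (0 < r)%N -> (r < #|kF|.-1)%N -> (2 <= n)%N -> (k <= #|kF|.-1)%N -> (s <= #|kF|.-1)%N ->
  (I1_inv_mod v pi red teich iota r (s_vec v pi red teich iota r n.-1 k) ->
   I1_inv_mod v pi red teich iota r (s_vec v pi red teich iota r n k)) /\
  (I1_inv_mod v pi red teich iota r (t_vec v pi red teich iota r n.-1 s) ->
   I1_inv_mod v pi red teich iota r (t_vec v pi red teich iota r n s)).
Proof.
move=> _ _ n_ge2 _ _; have pi0 := paf_pi_neq0 HF.
case: n n_ge2 => [|[|m]] // _.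
by split; apply: (I1_inv_mod_sum_upper HF Hteich) => x; rewrite ?s_vec_succ ?t_vec_succ.
Qed.
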